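(* Assume the following. (A1) $D$ is a real vector space; $M(\cdot,\cdot)$, $N(\cdot,\cdot)$ are symmetric bilinear forms on $D$, $M$ positive definite. (A2) There is a sequence $(\lambda_i,\varphi_i)_{i\in\mathbb N}\subset\mathbb R\times D$ with $\lambda_1\le\lambda_2\le\cdots$, $M(\varphi_i,v)=\lambda_iN(\varphi_i,v)$ for all $v\in D$, $M(\varphi_i,\varphi_j)=\delta_{ij}$, and $N(v,v)=\sum_{i=1}^\infty\lambda_i|N(v,\varphi_i)|^2$ for all $v\in D$. (A3) $X$ is a real vector space, $b_G$ a symmetric positive semidefinite bilinear form on $X$, and $T:D\to X$ linear with $b_G(Tu,Tv)=M(u,v)$ for all $u,v\in D$. (A4) $v_1,\dots,v_n\in D$ and $w_1,\dots,w_n\in X$ satisfy $b_G(w_i,Tv)=N(v_i,v)$ for all $v\in D$, $i=1,\dots,n$. (A5) $\rho>0$; with $A_0=(M(v_i,v_j))$, $A_1=(N(v_i,v_j))$, $A_2=(b_G(w_i,w_j))$, $A:=A_0-\rho A_1$, $B:=A_0-2\rho A_1+\rho^2A_2$, the matrix $B$ is positive definite; $\nu_1\le\cdots\le\nu_n$ are the eigenvalues of $Az=\nu Bz$ and $q$ is the number of negative ones. Suppose moreover $\rho\le\lambda_{m+1}$ for some integer $m\ge n$. Then $$\lambda_{m+1-k}\ \ge\ \rho-\frac{\rho}{1-\nu_k}\qquad(1\le k\le q).$$ In particular, if $A_1$ is positive definite and $\rho>\Lambda_n$, where $\Lambda_n$ is the largest eigenvalue of $A_0x=\Lambda A_1x$,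 then $\nu_n<0$, i.e. $q=n$, and the bound holds for all $1\le k\le n$. *)

From HB Require Import structures.
From mathcomp Require Import all_boot all_order all_algebra.
From mathcomp Require Import boolp classical_sets reals topology normedtype sequences.
Set Implicit Arguments.
Unset Strict Implicit.
Unset Printing Implicit Defensive.
Import Order.TTheory GRing.Theory Num.Theory numFieldNormedType.Exports.
Local Open Scope ring_scope.

(* symmetric bilinear form on an R-vector space V (symmetric + linear in the
   second argument, hence bilinear) *)
Definition sym_bilinear (R : realType) (V : lmodType R) (F : V -> V -> R) : Prop :=
  (forall u v, F u v = F v u) /\
  (forall (a : R) (u v w : V), F u (a *: v + w) = a * F u v + F u w).

Definition form_posdef (R : realType) (V : lmodType R) (F : V -> V -> R) : Prop :=
  forall v : V, v != 0 -> 0 < F v v.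

Definition form_possemidef (R : realType) (V : lmodType R) (F : V -> V -> R) : Prop :=
  forall v : V, 0 <= F v v.

Definition linear_map (R : realType) (U V : lmodType R) (T : U -> V) : Prop :=
  forall (a : R) (u w : U), T (a *: u + w) = a *: T u + T w.

Definition mx_posdef (R : realType) (n : nat) (B : 'M[R]_n) : Prop :=
  B^T = B /\ forall x : 'cV[R]_n, x != 0 -> 0 < (x^T *m B *m x) ord0 ord0.

Definition gram (R : realType) (V : Type) (n : nat) (F : V -> V -> R)
  (v : 'I_n -> V) : 'M[R]_n := \matrix_(i, j) F (v i) (v j).

(* nu : 'I_n -> R lists, nondecreasingly and with algebraic multiplicity,
   the eigenvalues of the generalized problem A z = nu B z (B invertible),
   i.e. the eigenvalues of B^{-1} A. *)
Definition gen_eigenvalues_sorted (R : realType) (n : nat) (A B : 'M[R]_n)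
  (nu : 'I_n -> R) : Prop :=
  char_poly (invmx B *m A) = \prod_(i < n) ('X - (nu i)%:P) /\
  (forall i j : 'I_n, (i <= j)%N -> nu i <= nu j).

From HB Require Import structures.
From mathcomp Require Import all_boot all_order all_algebra.
From mathcomp Require Import boolp classical_sets reals topology normedtype sequences.
From mathcomp Require Import ring lra zify.
Import Order.TTheory GRing.Theory Num.Theory numFieldNormedType.Exports.
Set Implicit Arguments.
Unset Strict Implicit.
Unset Printing Implicit Defensive.
Local Open Scope classical_set_scope.
Local Open Scope ring_scope.

(* Simultaneously diagonalize the pencil (A, B): for k <= q this yields a
   nonzero coefficient vector x, in the span of the generalized eigenvectors
   of nu_1, ..., nu_k, whose combination u = sum x_l v_l satisfies the k - 1
   conditions N(u, phi_j) = 0 for m - k + 1 < j <= m.  With w = sum x_l w_l,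
   the quadratic forms of A and B at x are M(u,u) - rho N(u,u) and
   b_G(Tu - rho w, Tu - rho w) =: b, so M(u,u) - rho N(u,u) <= nu_k b.
   Expanding along the phi_j with a_j = N(u, phi_j), one has
   M(u, phi_j) = lambda_j a_j and b_G(Tu - rho w, T phi_j) = (lambda_j - rho) a_j.
   If lambda_{m+1-k} were below rho - rho/(1 - nu_k), some 0 <= s < -nu_k
   satisfies (1 + s) lambda_{m+1-k} <= s rho; then every term
   a_j^2 (lambda_j - rho)((1 + s) lambda_j - s rho) is nonnegative, and
   Bessel's inequality for M and b_G together with the expansion of N(u,u)
   give M(u,u) - rho N(u,u) >= -s b > nu_k b, a contradiction. *)

Section MatrixForm.
Variable R : realFieldType.

Definition mxform n (A : 'M[R]_n) (x y : 'rV[R]_n) : R := (x *m A *m y^T) 0 0.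

Lemma mxformC n (A : 'M[R]_n) (x y : 'rV[R]_n) :
  A^T = A -> mxform A x y = mxform A y x.
Proof.
move=> hA; rewrite /mxform -[in LHS](trmxK (x *m A *m y^T)) mxE.
by rewrite !trmx_mul hA trmxK mulmxA.
Qed.

Lemma mxformD n (A B : 'M[R]_n) (x y : 'rV[R]_n) :
  mxform (A + B) x y = mxform A x y + mxform B x y.
Proof. by rewrite /mxform mulmxDr mulmxDl mxE. Qed.

Lemma mxformB n (A B : 'M[R]_n) (x y : 'rV[R]_n) :
  mxform (A - B) x y = mxform A x y - mxform B x y.
Proof. by rewrite /mxform mulmxBr mulmxBl !mxE. Qed.

Lemma mxformZ n (A : 'M[R]_n) r (x y : 'rV[R]_n) :
  mxform (r *: A) x y = r * mxform A x y.
Proof. by rewrite /mxform -scalemxAr -scalemxAl mxE. Qed.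

Lemma mxformM n (A P : 'M[R]_n) (x y : 'rV[R]_n) :
  mxform A (x *m P) (y *m P) = mxform (P *m A *m P^T) x y.
Proof. by rewrite /mxform trmx_mul !mulmxA. Qed.

Lemma mxform_diag n (d : 'rV[R]_n) (x : 'rV[R]_n) :
  mxform (diag_mx d) x x = \sum_i x 0 i ^+ 2 * d 0 i.
Proof.
rewrite /mxform mul_mx_diag mxE; apply: eq_bigr => i _; rewrite !mxE.
by rewrite expr2 mulrAC.
Qed.

Definition mxform_posdef n (B : 'M[R]_n) :=
  forall x : 'rV[R]_n, x != 0 -> 0 < mxform B x x.

Lemma mxform_posdef_unit n (B : 'M[R]_n) : mxform_posdef B -> B \in unitmx.
Proof.
move=> hB; rewrite -row_free_unit -kermx_eq0; apply/negPn/negP => hK.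
have yn0 : nz_row (kermx B) != 0 by rewrite nz_row_eq0.
move: (nz_row_sub (kermx B)); rewrite sub_kermx => /eqP hy.
by have := hB _ yn0; rewrite /mxform hy mul0mx mxE ltxx.
Qed.

Lemma char_poly_conj n (Q C : 'M[R]_n) : Q \in unitmx ->
  char_poly (invmx Q *m C *m Q) = char_poly C.
Proof.
move=> uQ; rewrite /char_poly.
have -> : char_poly_mx (invmx Q *m C *m Q) =
    map_mx polyC (invmx Q) *m char_poly_mx C *m map_mx polyC Q.
  rewrite /char_poly_mx mulmxBr mulmxBl !map_mxM; congr (_ - _).
  by rewrite -mulmxA -scalar_mxC mulmxA -map_mxM mulVmx // map_mx1 mul1mx.
rewrite !det_mulmx mulrC mulrA -det_mulmx -map_mxM mulmxV //.
by rewrite map_mx1 det1 mul1r.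
Qed.

End MatrixForm.

Lemma stable_eigenvector (F : fieldType) n (C S : 'M[F]_n.+1) (I : Type)
    (r : seq I) (f : I -> F) :
  stablemx S C -> S != 0 -> \prod_(i <- r) (C - (f i)%:M) = 0 ->
  exists a, exists2 y : 'rV_n.+1, y != 0 /\ (y <= S)%MS & y *m C = a *: y.
Proof.
move=> hS; rewrite -nz_row_eq0 => x0 /(congr1 (mulmx (nz_row S))).
rewrite mulmx0; move: (nz_row_sub S) x0.
elim: r (nz_row S) => [|i r IHr] x xS x0.
  by rewrite big_nil mulmx1 => /eqP; rewrite (negbTE x0).
rewrite big_cons mulmxA; have [hx|hx] := eqVneq (x *m (C - (f i)%:M)) 0.
  exists (f i), x => //; apply/eqP; rewrite -subr_eq0 -mul_mx_scalar -mulmxBr; exact/eqP.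
apply: IHr hx; rewrite mulmxBr mul_mx_scalar addmx_sub ?eqmx_opp ?scalemx_sub //.
exact: submx_trans (submxMr C xS) hS.
Qed.

Lemma card_prod_XsubC (F : fieldType) n (mu nu : 'I_n -> F) (p : pred F) :
  \prod_(i < n) ('X - (mu i)%:P) = \prod_(i < n) ('X - (nu i)%:P) ->
  #|[pred i | p (mu i)]| = #|[pred i | p (nu i)]|.
Proof.
move=> h; have : perm_eq (map mu (enum 'I_n)) (map nu (enum 'I_n)).
  by apply: prod_XsubC_eq; rewrite !big_map.
move/permP/(_ p); rewrite !count_map.
by rewrite !cardE /enum_mem !size_filter -!enumT.
Qed.

Section GenEig.
Variable R : realFieldType.

Lemma gen_eig_annihilator n (A B : 'M[R]_n.+1) (nu : 'I_n.+1 -> R) : B \in unitmx ->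
  char_poly (invmx B *m A) = \prod_(i < n.+1) ('X - (nu i)%:P) ->
  \prod_(i < n.+1) (A *m invmx B - (nu i)%:M) = 0.
Proof.
move=> uB hchi; have <- : horner_mx (A *m invmx B) (char_poly (invmx B *m A)) = 0.
  have uBi : invmx B \in unitmx by rewrite unitmx_inv.
  rewrite -(char_poly_conj (invmx B *m A) uBi) invmxK.
  by rewrite mulmxA mulmxV // mul1mx Cayley_Hamilton.
rewrite hchi rmorph_prod; apply: eq_bigr => i _.
by rewrite rmorphB /= horner_mx_X horner_mx_C.
Qed.

Lemma gen_eig_family n (A B : 'M[R]_n.+1) (nu : 'I_n.+1 -> R) :
  A^T = A -> B^T = B -> mxform_posdef B ->
  char_poly (invmx B *m A) = \prod_(i < n.+1) ('X - (nu i)%:P) ->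
  forall k, (k <= n.+1)%N -> exists (e : nat -> 'rV[R]_n.+1) (mu : nat -> R),
   forall i, (i < k)%N -> [/\ e i != 0, e i *m A = mu i *: (e i *m B) &
      forall j, (j < k)%N -> j != i -> mxform B (e i) (e j) = 0].
Proof.
move=> hA hB pB hchi; have uB := mxform_posdef_unit pB.
set C := A *m invmx B; have hC := gen_eig_annihilator uB hchi.
elim=> [|k IH] hk; first by exists (fun=> 0), (fun=> 0).
have [e [mu he]] := IH (ltnW hk).
pose E : 'M[R]_(k, n.+1) := \matrix_(c < k) e c.
pose K := B *m E^T.
have hK x (c : 'I_k) : (x *m K) 0 c = mxform B x (e c).
  by rewrite /K /mxform mulmxA [LHS]mxE [RHS]mxE; apply: eq_bigr => l _; rewrite !mxE.
have hEA : E *m A = diag_mx (\row_c mu c) *m (E *m B).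
  apply/row_matrixP => c; have [_ eA _] := he c (ltn_ord c).
  rewrite row_mul rowK eA mul_diag_mx.
  by apply/rowP => j; rewrite !mxE; congr (_ * _); apply: eq_bigr => l _; rewrite !mxE.
have hCK : C *m K = K *m diag_mx (\row_c mu c).
  rewrite /C /K mulmxA mulmxKV // -[A]hA -trmx_mul hEA trmx_mul tr_diag_mx.
  by rewrite trmx_mul hB.
have hS : stablemx (kermx K) C.
  by rewrite sub_kermx -mulmxA hCK mulmxA mulmx_ker mul0mx.
have hK0 : kermx K != 0.
  rewrite -mxrank_eq0 mxrank_ker -lt0n subn_gt0.
  exact: leq_ltn_trans (rank_leq_col K) hk.
have [a [y [yn0 yK] hy]] := stable_eigenvector hS hK0 hC.
have hyK (c : 'I_k) : mxform B y (e c) = 0.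
  by rewrite -hK; move: yK; rewrite sub_kermx => /eqP ->; rewrite mxE.
have hyA : y *m A = a *: (y *m B).
  by rewrite -(mulmxKV uB (y *m A)) -(mulmxA y A) hy -scalemxAl.
exists (fun i => if i == k then y else e i), (fun i => if i == k then a else mu i).
move=> i hi; case: (eqVneq i k) => [->|nik].
  split => // j hj nj; rewrite (negbTE nj).
  have hjk : (j < k)%N by rewrite ltn_neqAle nj -ltnS.
  exact: hyK (Ordinal hjk).
have hik : (i < k)%N by rewrite ltn_neqAle nik -ltnS.
have [e0 eA eB] := he i hik; split => // j hj nj.
case: (eqVneq j k) => [_|njk]; first by rewrite mxformC // (hyK (Ordinal hik)).
by apply: eB => //; rewrite ltn_neqAle njk -ltnS.
Qed.

Lemma gen_eig_diag n (A B : 'M[R]_n.+1) (nu : 'I_n.+1 -> R) :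
  A^T = A -> B^T = B -> mxform_posdef B ->
  char_poly (invmx B *m A) = \prod_(i < n.+1) ('X - (nu i)%:P) ->
  exists (P : 'M[R]_n.+1) (mu d : 'I_n.+1 -> R),
  [/\ P \in unitmx, P *m A *m P^T = diag_mx (\row_i (mu i * d i)),
      P *m B *m P^T = diag_mx (\row_i d i), (forall i, 0 < d i) &
      \prod_(i < n.+1) ('X - (mu i)%:P) = \prod_(i < n.+1) ('X - (nu i)%:P)].
Proof.
move=> hA hB pB hchi; have uB := mxform_posdef_unit pB.
have [e [mu he]] := gen_eig_family hA hB pB hchi (leqnn n.+1).
pose P : 'M[R]_n.+1 := \matrix_i e i.
pose d i := mxform B (e i) (e i).
have hPB : P *m B *m P^T = diag_mx (\row_i d i).
  apply/matrixP => i j; have [_ _ eB] := he i (ltn_ord i).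
  have -> : (P *m B *m P^T) i j = mxform B (e i) (e j).
    transitivity (row i (P *m B *m P^T) 0 j); first by rewrite [RHS]mxE.
    by rewrite !row_mul rowK /mxform !mxE; apply: eq_bigr => l _; rewrite !mxE.
  rewrite !mxE; case: (eqVneq i j) => [->|nij]; first by rewrite mulr1n.
  by rewrite mulr0n eB // (inj_eq val_inj) eq_sym.
have hPA : P *m A = diag_mx (\row_i mu i) *m (P *m B).
  apply/row_matrixP => i; have [_ eA _] := he i (ltn_ord i).
  rewrite row_mul rowK eA mul_diag_mx.
  by apply/rowP => j; rewrite !mxE; congr (_ * _); apply: eq_bigr => l _; rewrite !mxE.
have dpos (i : 'I_n.+1) : 0 < d i by apply: pB; have [] := he i (ltn_ord i).
have uP : P \in unitmx.
  have : P *m B *m P^T \in unitmx.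
    rewrite hPB unitmxE det_diag unitfE prodf_seq_neq0.
    by apply/allP => i _; rewrite mxE gt_eqF.
  by rewrite !unitmx_mul => /andP [/andP [-> _] _].
exists P, (fun i => mu i), d; split => //.
- rewrite hPA -!mulmxA (mulmxA P) hPB mul_diag_mx.
  by apply/matrixP => i j; rewrite !mxE mulrnAr.
rewrite -hchi.
have -> : invmx B *m A = invmx (P *m B) *m diag_mx (\row_i mu i) *m (P *m B).
  have hPBA : P *m A = (P *m B) *m (invmx B *m A) by rewrite mulmxA mulmxK.
  by rewrite -mulmxA -hPA hPBA mulKmx // unitmx_mul uP.
rewrite char_poly_conj ?unitmx_mul ?uP ?uB // char_poly_trig ?diag_mx_is_trig //.
by apply: eq_bigr => i _; rewrite !mxE eqxx mulr1n.
Qed.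

Lemma gen_eig_rayleigh n (A B : 'M[R]_n.+1) (nu : 'I_n.+1 -> R) :
  A^T = A -> B^T = B -> mxform_posdef B ->
  char_poly (invmx B *m A) = \prod_(i < n.+1) ('X - (nu i)%:P) ->
  exists (P : 'M[R]_n.+1) (mu : 'I_n.+1 -> R),
  [/\ P \in unitmx,
      \prod_(i < n.+1) ('X - (mu i)%:P) = \prod_(i < n.+1) ('X - (nu i)%:P) &
      forall (a : R) (c : 'rV[R]_n.+1), (forall i, a < mu i -> c 0 i = 0) ->
        mxform A (c *m P) (c *m P) <= a * mxform B (c *m P) (c *m P)].
Proof.
move=> hA hB pB hchi.
have [P [mu [d [uP hPA hPB dpos hmu]]]] := gen_eig_diag hA hB pB hchi.
exists P, mu; split => // a c hc.
rewrite !mxformM hPA hPB !mxform_diag mulr_sumr; apply: ler_sum => i _; rewrite !mxE.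
have [hi|hi] := lerP (mu i) a; last by rewrite hc // expr2 !mul0r mulr0.
by rewrite [leRHS]mulrCA ler_wpM2l ?sqr_ge0 // ler_wpM2r // ltW.
Qed.

Lemma card_ord_ltn n j : (j <= n)%N -> #|[pred i : 'I_n | (i < j)%N]| = j.
Proof.
move=> hj; rewrite -sum1_card.
rewrite (eq_bigl (fun i : 'I_n => predT i && (i < j)%N)) //.
by rewrite (big_ord_narrow_cond hj) sum1_card card_ord.
Qed.

Lemma sorted_card_le n (nu : 'I_n -> R) (k : 'I_n) :
  {homo nu : i j / (i <= j)%N >-> (i <= j)%R} -> (k < #|[pred i | (nu i <= nu k)%R]|)%N.
Proof.
move=> hmono; rewrite -{1}(card_ord_ltn (ltn_ord k)); apply: subset_leq_card.
by apply/fintype.subsetP => i; rewrite !inE; apply: hmono.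
Qed.

Lemma sorted_lt_of_card n (nu : 'I_n -> R) (a : R) (k : 'I_n) :
  {homo nu : i j / (i <= j)%N >-> (i <= j)%R} ->
  (k < #|[pred i | (nu i < a)%R]|)%N -> nu k < a.
Proof.
move=> hmono; apply: contraTT; rewrite -leNgt -leqNgt => hk.
rewrite -[leqRHS](card_ord_ltn (ltnW (ltn_ord k))); apply: subset_leq_card.
apply/fintype.subsetP => i; rewrite !inE; apply: contraTT; rewrite -leNgt -leqNgt => hki.
exact: le_trans hk (hmono _ _ hki).
Qed.

Lemma exists_ker_rayleigh_le n (A B : 'M[R]_n.+1) (nu : 'I_n.+1 -> R) (k : 'I_n.+1)
    p (L : 'M[R]_(n.+1, p)) :
  A^T = A -> B^T = B -> mxform_posdef B ->
  char_poly (invmx B *m A) = \prod_(i < n.+1) ('X - (nu i)%:P) ->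
  {homo nu : i j / (i <= j)%N >-> (i <= j)%R} -> (p <= k)%N ->
  exists2 x : 'rV[R]_n.+1, x != 0 & x *m L = 0 /\ mxform A x x <= nu k * mxform B x x.
Proof.
move=> hA hB pB hchi hmono hpk.
have [P [mu [uP hmu hray]]] := gen_eig_rayleigh hA hB pB hchi.
pose S := [pred i | nu k < mu i].
have hS : (#|S| + p < n.+1)%N.
  have := sorted_card_le k hmono; rewrite -(card_prod_XsubC (fun x => x <= nu k) hmu).
  have := cardC S; rewrite card_ord.
  have -> : #|[pred i | (mu i <= nu k)%R]| = #|[predC S]|.
    by apply: eq_card => i; rewrite !inE -leNgt.
  move=> hcard hk; apply: leq_trans (eq_leq hcard); rewrite ltn_add2l.
  exact: leq_ltn_trans hpk hk.
(* A kernel vector of the second block has its coordinates in S equal to 0. *)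
pose L' := row_mx (P *m L) (colsub (@enum_val _ (mem S)) (1%:M : 'M[R]_n.+1)).
have hK : kermx L' != 0.
  rewrite -mxrank_eq0 mxrank_ker -lt0n subn_gt0.
  by apply: leq_ltn_trans (rank_leq_col L') _; rewrite addnC.
have : nz_row (kermx L') *m L' = 0 by apply/eqP; rewrite -sub_kermx nz_row_sub.
rewrite mul_mx_row => /eqP; rewrite row_mx_eq0 => /andP [/eqP hcL /eqP hcS].
exists (nz_row (kermx L') *m P).
  by rewrite mulmx_free_eq0 ?row_free_unit // nz_row_eq0.
split; first by rewrite -mulmxA hcL.
apply: hray => i hi; have Si : i \in S by [].
have /rowP/(_ (enum_rank_in Si i)) := hcS.
by rewrite mulmx_colsub mulmx1 !mxE enum_rankK_in.
Qed.

Lemma mxform_pencil_lt0 n (A B : 'M[R]_n.+1) (lam : 'I_n.+1 -> R) (rho : R) :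
  A^T = A -> B^T = B -> mxform_posdef B ->
  char_poly (invmx B *m A) = \prod_(i < n.+1) ('X - (lam i)%:P) ->
  {homo lam : i j / (i <= j)%N >-> (i <= j)%R} -> lam ord_max < rho ->
  forall x : 'rV[R]_n.+1, x != 0 -> mxform (A - rho *: B) x x < 0.
Proof.
move=> hA hB pB hchi hmono hrho x x0.
have [P [mu [uP hmu hray]]] := gen_eig_rayleigh hA hB pB hchi.
have mu_le i : mu i <= lam ord_max.
  have : root (\prod_(j < n.+1) ('X - (lam j)%:P)) (mu i).
    by rewrite -hmu /root horner_prod (bigD1 i) //= !hornerE subrr mul0r.
  rewrite /root horner_prod => /prodf_eq0 [j _].
  by rewrite !hornerE subr_eq0 => /eqP ->; apply: hmono; rewrite -ltnS.
rewrite mxformB mxformZ subr_lt0 -(mulmxKV uP x).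
apply: le_lt_trans (hray (lam ord_max) _ _) _; first by move=> i /lt_geF; rewrite mu_le.
by rewrite ltr_pM2r // pB // mulmxKV.
Qed.

Lemma gen_eig_lt0 n (A B : 'M[R]_n) (nu : 'I_n -> R) :
  mxform_posdef B -> (forall x : 'rV[R]_n, x != 0 -> mxform A x x < 0) ->
  char_poly (invmx B *m A) = \prod_(i < n) ('X - (nu i)%:P) -> forall i, nu i < 0.
Proof.
move=> pB hA hchi i; have uB := mxform_posdef_unit pB.
have /eigenvalueP [y hy y0] : eigenvalue (invmx B *m A) (nu i).
  rewrite eigenvalue_root_char hchi /root horner_prod (bigD1 i) //=.
  by rewrite !hornerE subrr mul0r.
have z0 : y *m invmx B != 0 by rewrite mulmx_free_eq0 ?row_free_unit ?unitmx_inv.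
have hz : mxform A (y *m invmx B) (y *m invmx B) =
          nu i * mxform B (y *m invmx B) (y *m invmx B).
  by rewrite /mxform -(mulmxA y) hy mulmxKV // -scalemxAl mxE.
by have := hA _ z0; have := pB _ z0; rewrite hz; nra.
Qed.

End GenEig.

Lemma mx_posdef_mxform (R : realType) n (B : 'M[R]_n) :
  mx_posdef B -> B^T = B /\ mxform_posdef B.
Proof.
by case=> hB hpd; split=> // x x0; have := hpd x^T; rewrite trmxK trmx_eq0; apply.
Qed.

Definition lincomb (R : realType) (V : lmodType R) n (z : 'I_n -> V)
  (x : 'rV[R]_n) : V :=
  \sum_l x 0 l *: z l.

Section BilinearForm.
Variables (R : realType) (V : lmodType R) (F : V -> V -> R).
Hypothesis hF : sym_bilinear F.

Lemma bilin0r u : F u 0 = 0.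
Proof. by have := hF.2 (-1) u u u; rewrite scaleN1r addNr mulN1r addNr. Qed.

Lemma bilinDr u v w : F u (v + w) = F u v + F u w.
Proof. by have := hF.2 1 u v w; rewrite scale1r mul1r. Qed.

Lemma bilinZr u a v : F u (a *: v) = a * F u v.
Proof. by have := hF.2 a u v 0; rewrite addr0 bilin0r addr0. Qed.

Lemma bilinBr u v w : F u (v - w) = F u v - F u w.
Proof. by rewrite bilinDr -scaleN1r bilinZr mulN1r. Qed.

Lemma bilinZl u a v : F (a *: v) u = a * F v u.
Proof. by rewrite hF.1 bilinZr (hF.1 u). Qed.

Lemma bilinBl u v w : F (v - w) u = F v u - F w u.
Proof. by rewrite hF.1 bilinBr !(hF.1 u). Qed.

Lemma bilin_sumr (I : Type) (r : seq I) (P : pred I) (f : I -> V) u :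
  F u (\sum_(i <- r | P i) f i) = \sum_(i <- r | P i) F u (f i).
Proof. exact: (big_morph (F u) (bilinDr u) (bilin0r u)). Qed.

Lemma bilin_suml (I : Type) (r : seq I) (P : pred I) (f : I -> V) u :
  F (\sum_(i <- r | P i) f i) u = \sum_(i <- r | P i) F (f i) u.
Proof. by rewrite hF.1 bilin_sumr; apply: eq_bigr => i _; rewrite hF.1. Qed.

Lemma posdef_possemidef : form_posdef F -> form_possemidef F.
Proof. by move=> hpd u; have [->|/hpd/ltW//] := eqVneq u 0; rewrite bilin0r. Qed.

Lemma bessel_ineq (e : nat -> V) y J : form_possemidef F ->
  (forall i j, F (e i) (e j) = (i == j)%:R) ->
  \sum_(j < J) F y (e j) ^+ 2 <= F y y.
Proof.
move=> hpsd horth; pose S := \sum_(j < J) F y (e j) *: e j.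
have hyS : F y S = \sum_(j < J) F y (e j) ^+ 2.
  by rewrite bilin_sumr; apply: eq_bigr => j _; rewrite bilinZr expr2.
have hSS : F S S = \sum_(j < J) F y (e j) ^+ 2.
  rewrite bilin_suml; apply: eq_bigr => i _; rewrite bilinZl bilin_sumr.
  rewrite (bigD1 i) //= bilinZr horth eqxx mulr1 big1 ?addr0 ?expr2 // => j hji.
  by rewrite bilinZr horth eq_sym (inj_eq val_inj) (negbTE hji) mulr0.
by have := hpsd (y - S); rewrite bilinBl !bilinBr hyS hSS (hF.1 S) hyS; lra.
Qed.

Lemma gram_tr n (z : 'I_n -> V) : (gram F z)^T = gram F z.
Proof. by apply/matrixP => i j; rewrite !mxE hF.1. Qed.

Lemma mxform_gram n (z : 'I_n -> V) (x : 'rV[R]_n) :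
  mxform (gram F z) x x = F (lincomb z x) (lincomb z x).
Proof.
rewrite /mxform mxE bilin_suml.
under eq_bigr => j _ do rewrite !mxE mulr_suml.
rewrite exchange_big; apply: eq_bigr => l _.
rewrite bilinZl bilin_sumr mulr_sumr; apply: eq_bigr => j _.
by rewrite bilinZr !mxE; ring.
Qed.

Lemma form_lincomb_mx n p (z : 'I_n -> V) (g : 'I_p -> V) (x : 'rV[R]_n) j :
  (x *m \matrix_(l, k) F (z l) (g k)) 0 j = F (lincomb z x) (g j).
Proof.
by rewrite mxE bilin_suml; apply: eq_bigr => l _; rewrite bilinZl mxE.
Qed.

End BilinearForm.

Lemma pencil_quadratic_ge0 (R : realFieldType) (l c rho s : R) :
  0 < rho -> 0 <= s -> (1 + s) * c <= s * rho -> l <= c \/ rho <= l ->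
  0 <= (l - rho) * ((1 + s) * l - s * rho).
Proof.
move=> hrho hs hc [hl|hl]; last by apply: mulr_ge0; nra.
have hl' : (1 + s) * l <= (1 + s) * c by apply: ler_wpM2l => //; lra.
by apply: mulr_le0; nra.
Qed.

Lemma exists_shift (R : realFieldType) (rho a c : R) :
  0 < rho -> a < 0 -> c < rho - rho / (1 - a) ->
  exists s, [/\ 0 <= s, s < - a & (1 + s) * c <= s * rho].
Proof.
move=> hrho ha; have h1a : 0 < 1 - a by lra.
have -> : rho - rho / (1 - a) = - a * rho / (1 - a) by field; rewrite gt_eqF.
rewrite ltr_pdivlMr // => hc.
have [hc0|hc0] := lerP c 0; first by exists 0; split; lra.
have hrc : 0 < rho - c by nra.
exists (c / (rho - c)); split.
- by rewrite divr_ge0 // ltW.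
- by rewrite ltr_pdivrMr //; lra.
- by rewrite le_eqVlt; apply/orP; left; apply/eqP; field; rewrite gt_eqF.
Qed.

Section EigenExpansion.
Variables (R : realType) (D X : lmodType R) (M N : D -> D -> R) (bG : X -> X -> R).
Variables (T : D -> X) (lam : nat -> R) (phi : nat -> D).
Hypotheses (hM : sym_bilinear M) (hN : sym_bilinear N) (hMpsd : form_possemidef M)
  (hbG : sym_bilinear bG) (hbGpsd : form_possemidef bG)
  (hTM : forall u v : D, bG (T u) (T v) = M u v)
  (hlam_mono : forall i j : nat, (i <= j)%N -> lam i <= lam j)
  (heig : forall (i : nat) (v : D), M (phi i) v = lam i * N (phi i) v)
  (horth : forall i j : nat, M (phi i) (phi j) = (i == j)%:R)
  (hexp : forall v : D,
      series (fun i => lam i * (N v (phi i)) ^+ 2) @ \oo --> N v v).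

Lemma expansion_bound (u : D) (y : X) (rho s : R) : 0 < rho -> 0 <= s ->
  (forall j, rho * (lam j * N u (phi j) ^+ 2) <=
             M u (phi j) ^+ 2 + s * bG y (T (phi j)) ^+ 2) ->
  rho * N u u <= M u u + s * bG y y.
Proof.
move=> hrho hs hterm; rewrite -ler_pdivlMl //.
apply: (cvgr_to_le (@hexp u)); apply: nearW => J.
rewrite /series /= big_mkord ler_pdivlMl // mulr_sumr.
apply: le_trans; first by apply: ler_sum => j _; exact: hterm.
rewrite big_split /= -mulr_sumr.
apply: lerD; first exact: (bessel_ineq hM u J hMpsd (@horth)).
apply: ler_wpM2l => //.
by apply: (bessel_ineq hbG (e := fun j => T (phi j)) y J hbGpsd) => i j; rewrite hTM.
Qed.

Lemma lam_lower_bound (u : D) (w : X) (rho a : R) (m k : nat) :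
  0 < rho -> (k < m)%N -> rho <= lam m ->
  (forall j, bG w (T (phi j)) = N u (phi j)) ->
  (forall j : 'I_k, N u (phi (m - k + j)) = 0) ->
  a < 0 -> 0 < bG (T u - rho *: w) (T u - rho *: w) ->
  M u u - rho * N u u <= a * bG (T u - rho *: w) (T u - rho *: w) ->
  rho - rho / (1 - a) <= lam (m - k.+1).
Proof.
move=> hrho hkm hrm hw hwin ha hb hA.
set y := T u - rho *: w in hb hA *; set c := lam (m - k.+1).
rewrite leNgt; apply/negP => /(exists_shift hrho ha) [s [hs0 hsa hsc]].
have hMphi j : M u (phi j) = lam j * N u (phi j) by rewrite hM.1 heig hN.1.
have hyphi j : bG y (T (phi j)) = (lam j - rho) * N u (phi j).
  by rewrite bilinBl // bilinZl // hTM hw hMphi; ring.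
have hterm j : rho * (lam j * N u (phi j) ^+ 2) <=
               M u (phi j) ^+ 2 + s * bG y (T (phi j)) ^+ 2.
  rewrite -subr_ge0 hMphi hyphi.
  have -> : (lam j * N u (phi j)) ^+ 2 + s * ((lam j - rho) * N u (phi j)) ^+ 2 -
      rho * (lam j * N u (phi j) ^+ 2) =
      N u (phi j) ^+ 2 * ((lam j - rho) * ((1 + s) * lam j - s * rho)) by ring.
  have [hj|hj] := ltnP j (m - k).
    apply/mulr_ge0/(pencil_quadratic_ge0 hrho hs0 hsc); first exact: sqr_ge0.
    by left; apply: hlam_mono; lia.
  have [hjm|hjm] := ltnP j m.
    have hjk : (j - (m - k) < k)%N by lia.
    by have := hwin (Ordinal hjk); rewrite /= subnKC // => ->; rewrite expr2 !mul0r.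
  apply/mulr_ge0/(pencil_quadratic_ge0 hrho hs0 hsc); first exact: sqr_ge0.
  by right; apply: le_trans hrm (hlam_mono hjm).
have := expansion_bound hrho hs0 hterm; nra.
Qed.

End EigenExpansion.

Section GramPencil.
Variables (R : realType) (D X : lmodType R) (M N : D -> D -> R) (bG : X -> X -> R).
Variables (T : D -> X) (n : nat) (v : 'I_n -> D) (w : 'I_n -> X).
Hypotheses (hM : sym_bilinear M) (hN : sym_bilinear N) (hbG : sym_bilinear bG)
  (hTM : forall u u' : D, bG (T u) (T u') = M u u')
  (hw : forall (i : 'I_n) (u : D), bG (w i) (T u) = N (v i) u).

Lemma lincomb_repr (x : 'rV[R]_n) (u : D) : bG (lincomb w x) (T u) = N (lincomb v x) u.
Proof.
rewrite (bilin_suml hbG) (bilin_suml hN).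
by apply: eq_bigr => l _; rewrite (bilinZl hbG) (bilinZl hN) hw.
Qed.

Lemma mxform_gram_pencil (rho : R) (x : 'rV[R]_n) :
  mxform (gram M v - rho *: gram N v) x x =
  M (lincomb v x) (lincomb v x) - rho * N (lincomb v x) (lincomb v x).
Proof. by rewrite mxformB mxformZ (mxform_gram hM) (mxform_gram hN). Qed.

Lemma mxform_gram_shift (rho : R) (x : 'rV[R]_n) :
  mxform (gram M v - (2 * rho) *: gram N v + rho ^+ 2 *: gram bG w) x x =
  bG (T (lincomb v x) - rho *: lincomb w x) (T (lincomb v x) - rho *: lincomb w x).
Proof.
rewrite mxformD mxformB !mxformZ !(mxform_gram hM, mxform_gram hN, mxform_gram hbG).
rewrite (bilinBl hbG) !(bilinBr hbG) !(bilinZl hbG) !(bilinZr hbG) hTM (hbG.1 (T _)).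
by rewrite !lincomb_repr; ring.
Qed.

End GramPencil.

Theorem theorem4p4
  (R : realType)
  (D : lmodType R) (M N : D -> D -> R)
  (hM : sym_bilinear M) (hN : sym_bilinear N) (hMpd : form_posdef M)
  (* 0-based: lam i, phi i stand for lambda_{i+1}, phi_{i+1} *)
  (lam : nat -> R) (phi : nat -> D)
  (hlam_mono : forall i j : nat, (i <= j)%N -> lam i <= lam j)
  (heig : forall (i : nat) (v : D), M (phi i) v = lam i * N (phi i) v)
  (horth : forall i j : nat, M (phi i) (phi j) = (i == j)%:R)
  (hexp : forall v : D,
      series (fun i => lam i * (N v (phi i)) ^+ 2) @ \oo --> N v v)
  (X : lmodType R) (bG : X -> X -> R)
  (hbG : sym_bilinear bG) (hbGpsd : form_possemidef bG)
  (T : D -> X) (hT : linear_map T)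
  (hTM : forall u v : D, bG (T u) (T v) = M u v)
  (n : nat) (v : 'I_n -> D) (w : 'I_n -> X)
  (hw : forall (i : 'I_n) (u : D), bG (w i) (T u) = N (v i) u)
  (rho : R) (hrho : 0 < rho)
  (hB : mx_posdef (gram M v - (2 * rho) *: gram N v + (rho ^+ 2) *: gram bG w))
  (nu : 'I_n -> R)
  (hnu : gen_eigenvalues_sorted (gram M v - rho *: gram N v)
            (gram M v - (2 * rho) *: gram N v + (rho ^+ 2) *: gram bG w) nu)
  (q : nat) (hq : q = #|[pred k : 'I_n | nu k < 0]|)
  (m : nat) (hmn : (n <= m)%N) (hrhom : rho <= lam m) :
  (* k0 = k - 1 *)
  (forall k0 : 'I_n, (k0 < q)%N ->
      rho - rho / (1 - nu k0) <= lam (m - k0.+1)%N) /\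
  (mx_posdef (gram N v) ->
   forall Lam : 'I_n -> R,
     gen_eigenvalues_sorted (gram M v) (gram N v) Lam ->
     (forall i : 'I_n, Lam i < rho) ->
     (forall k : 'I_n, nu k < 0) /\ q = n /\
     (forall k0 : 'I_n, rho - rho / (1 - nu k0) <= lam (m - k0.+1)%N)).
Proof.
case: n v w hw hB nu hnu hq hmn => [|n] v w hw hB nu hnu hq hmn.
  have q0 : q = 0%N by rewrite hq; apply: eq_card0; case.
  by split=> [[]//|_ Lam _ _]; split=> [[]//|]; split=> [//|[]].
have [hBT pB] := mx_posdef_mxform hB.
have hAT : (gram M v - rho *: gram N v)^T = gram M v - rho *: gram N v.
  by rewrite linearB linearZ /= (gram_tr hM) (gram_tr hN).
have part1 (k : 'I_n.+1) : (k < q)%N -> rho - rho / (1 - nu k) <= lam (m - k.+1)%N.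
  rewrite hq => /(sorted_lt_of_card hnu.2) hk.
  pose L := \matrix_(l < n.+1, j < k) N (v l) (phi (m - k + j)%N).
  have [x x0 [/rowP hxL hxA]] :=
    exists_ker_rayleigh_le L hAT hBT pB hnu.1 hnu.2 (leqnn k).
  apply: (lam_lower_bound hM hN (posdef_possemidef hM hMpd) hbG hbGpsd hTM hlam_mono
    heig horth hexp (u := lincomb v x) (w := lincomb w x)) => //.
  - exact: leq_trans (ltn_ord k) hmn.
  - by move=> j; apply: (lincomb_repr hN hbG hw).
  - by move=> j; have := hxL j; rewrite /L (form_lincomb_mx hN) mxE.
  - by rewrite -(mxform_gram_shift hM hN hbG hTM hw); apply: pB.
  - by rewrite -(mxform_gram_pencil v hM hN) -(mxform_gram_shift hM hN hbG hTM hw).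
split=> // hNpd Lam hLam hLrho.
have hneg := mxform_pencil_lt0 (gram_tr hM v) (gram_tr hN v) (mx_posdef_mxform hNpd).2
  hLam.1 hLam.2 (hLrho ord_max).
have hall := gen_eig_lt0 pB hneg hnu.1.
have hqn : q = n.+1 by rewrite hq -[RHS]card_ord; apply: eq_card => k; rewrite !inE hall.
by split=> //; split=> // k; apply: part1; rewrite hqn.
Qed.
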